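(* Let $X,Y$ be real Banach spaces with a bilinear map $\langle\cdot,\cdot\rangle\colon X\times Y\to\mathbb{R}$ and normalized sequences $(e_j)\subset X$, $(f_j)\subset Y$ satisfying (B1)–(B5) below, and assume $(e_j)$ is $(C_u,C_s)$-subsymmetric. Let $L\in\mathbb{N}$, let $(\mathcal{B}_j)$ be a sequence of sets $\mathcal{B}_j\subset\mathbb{N}$ with $|\mathcal{B}_j|=L$ and $\max\mathcal{B}_j<\min\mathcal{B}_{j+1}$ for all $j$, and let $(\varepsilon_k)\in\{\pm1\}^{\mathbb{N}}$. Put $b_j=\sum_{k\in\mathcal{B}_j}\varepsilon_ke_k$, $d_j=\sum_{k\in\mathcal{B}_j}\varepsilon_kf_k$, and define $B,Q\colon X\to X$ by $$Bx=\sum_{j=1}^\infty\langle x,f_j\rangle b_j,\qquad Qx=\sum_{j=1}^\infty\langle x,d_j\rangle e_j,\qquad x\in X.$$ Then $B$ and $Q$ are well defined bounded operators (the series converging in $\sigma(X,Y)$), $QB=L\cdot I_X$, and $\|B\|,\|Q\|\le C_uC_s\cdot L$.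
   Context: Standing assumptions: (B1) if $\langle x,y\rangle=0$ for all $y\in Y$ then $x=0$; (B2) if $\langle x,y\rangle=0$ for all $x\in X$ then $y=0$; (B3) there is $C_d>0$ with $|\langle x,y\rangle|\le C_d\|x\|\|y\|$; (B4) $\langle e_j,f_k\rangle=1$ if $j=k$ and $0$ otherwise; (B5) every $x\in X$ has the unique representation $x=\sum_j\langle x,f_j\rangle e_j$ converging in $\sigma(X,Y)$, the topology generated by the seminorms $x\mapsto|\langle x,y\rangle|$, $y\in Y$. Series $\sum a_je_j$ are required to converge in $\sigma(X,Y)$. $(e_j)$ is $C_u$-unconditional if $\|\sum\gamma_ja_je_j\|\le C_u\sup_k|\gamma_k|\|\sum a_je_j\|$; $C_s$-spreading if for every increasing $(n_j)$, $C_s^{-1}\|\sum a_je_{n_j}\|\le\|\sum a_je_j\|\le C_s\|\sum a_je_{n_j}\|$; $(C_u,C_s)$-subsymmetric if both. *)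

From HB Require Import structures.
From mathcomp Require Import all_boot all_order all_algebra.
From mathcomp Require Import all_classical all_reals all_analysis.
Set Implicit Arguments. Unset Strict Implicit. Unset Printing Implicit Defensive.
Import Order.TTheory GRing.Theory Num.Theory.
Import numFieldNormedType.Exports.
Local Open Scope classical_set_scope.
Local Open Scope ring_scope.

Section Defs.
Context {R : realType} {X Y : normedModType R} (pair : X -> Y -> R).

(** The series [\sum_j u j] converges to [x] in sigma(X,Y): for every [y],
    the pairings of the partial sums with [y] converge to [pair x y]. *)
Definition sigma_sum (u : nat -> X) (x : X) : Prop :=
  forall y : Y, (fun n : nat => pair (\sum_(i < n) u i) y) @ \oo --> pair x y.

Definition unconditional (e : nat -> X) (Cu : R) : Prop :=
  forall (a gamma : nat -> R) (M : R) (x : X),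
    (forall k, `|gamma k| <= M) ->
    sigma_sum (fun j => a j *: e j) x ->
    exists z, sigma_sum (fun j => (gamma j * a j) *: e j) z /\
              `|z| <= Cu * M * `|x|.

Definition spreading (e : nat -> X) (Cs : R) : Prop :=
  forall (a : nat -> R) (n : nat -> nat), (forall i, (n i < n i.+1)%N) ->
    (forall x, sigma_sum (fun j => a j *: e j) x ->
       exists z, sigma_sum (fun j => a j *: e (n j)) z /\ Cs^-1 * `|z| <= `|x|) /\
    (forall z, sigma_sum (fun j => a j *: e (n j)) z ->
       exists x, sigma_sum (fun j => a j *: e j) x /\ `|x| <= Cs * `|z|).

Definition subsymmetric (e : nat -> X) (Cu Cs : R) : Prop :=
  unconditional e Cu /\ spreading e Cs.

End Defs.

From HB Require Import structures.
From mathcomp Require Import all_boot all_order all_algebra.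
From mathcomp Require Import all_classical all_reals all_analysis.
Import Order.TTheory GRing.Theory Num.Theory.
Import numFieldNormedType.Exports.
Local Open Scope ring_scope.

(* B is the sum over m < L of the operators x |-> sum_j <x,f_j> eps_{n_m j} e_{n_m j},
   where n_m j is the m-th element of B_j.  Each n_m is increasing, so unconditionality
   (for the signs) followed by spreading (for the reindexing) bounds each summand by
   C_u C_s.  Dually Q is the sum of x |-> sum_j eps_{n_m j} <x,f_{n_m j}> e_j:
   unconditionality with the multiplier eps times the indicator of the range of n_m
   keeps only the coordinates of x along n_m, and spreading compresses them back onto
   (e_j).  Finally <b_i,d_j> = L [i = j], since distinct blocks are disjoint and
   eps_k^2 = 1; hence QB = L. *)

Section LinearPairing.
Context {R : realType} {X Y : normedModType R} {pair : X -> Y -> R}.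
Hypothesis pair_linl : forall (a : R) (x1 x2 : X) (y : Y),
  pair (a *: x1 + x2) y = a * pair x1 y + pair x2 y.

Lemma pair0 y : pair 0 y = 0.
Proof.
have := pair_linl 1 0 0 y; rewrite scaler0 addr0 mul1r => h.
by apply: (addIr (pair 0 y)); rewrite add0r -h.
Qed.

Lemma pairD x1 x2 y : pair (x1 + x2) y = pair x1 y + pair x2 y.
Proof. by have := pair_linl 1 x1 x2 y; rewrite scale1r mul1r. Qed.

Lemma pairZ a x y : pair (a *: x) y = a * pair x y.
Proof. by rewrite -[a *: x]addr0 pair_linl pair0 addr0. Qed.

Lemma pairB x1 x2 y : pair (x1 - x2) y = pair x1 y - pair x2 y.
Proof. by rewrite pairD -scaleN1r pairZ mulN1r. Qed.

Lemma pair_sum (I : Type) (r : seq I) (P : pred I) (F : I -> X) y :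
  pair (\sum_(i <- r | P i) F i) y = \sum_(i <- r | P i) pair (F i) y.
Proof. by elim/big_rec2: _ => [|i x s _ <-]; rewrite ?pair0 ?pairD. Qed.

Lemma sigma_sumD u v x z : sigma_sum pair u x -> sigma_sum pair v z ->
  sigma_sum pair (fun j => u j + v j) (x + z).
Proof.
move=> hu hv y; rewrite pairD; under eq_cvg do rewrite big_split pairD.
exact: cvgD.
Qed.

Lemma sigma_sumZ a u x : sigma_sum pair u x ->
  sigma_sum pair (fun j => a *: u j) (a *: x).
Proof.
move=> hu y; rewrite pairZ; under eq_cvg do rewrite -scaler_sumr pairZ.
exact: cvgMl_tmp.
Qed.

Lemma sigma_sum_big (I : Type) (r : seq I) (P : pred I)
    (u : I -> nat -> X) (x : I -> X) :
  (forall i, P i -> sigma_sum pair (u i) (x i)) ->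
  sigma_sum pair (fun j => \sum_(i <- r | P i) u i j) (\sum_(i <- r | P i) x i).
Proof.
move=> hu y; rewrite pair_sum; under eq_cvg do rewrite exchange_big pair_sum.
by apply: cvg_big => [|i /hu]; [exact: add_continuous|exact].
Qed.

Lemma pair_sigma_sum_single j y u x : sigma_sum pair u x ->
  (forall i, i != j -> pair (u i) y = 0) -> pair x y = pair (u j) y.
Proof.
move=> hu u0; rewrite -(cvg_lim _ (hu y)) //; apply: cvg_lim => //.
apply: cvg_near_cst; near=> n.
have jn : (j < n)%N by near: n; exact: nbhs_infty_gt.
rewrite pair_sum (bigD1 (Ordinal jn)) //= big1 ?addr0 // => i /eqP ij.
by apply: u0; apply/eqP => ij'; apply: ij; exact: val_inj.
Unshelve. all: by end_near.
Qed.

Lemma pair_scale_linear {Z : lmodType R} (g : nat -> Y) (v : nat -> Z) a x1 x2 j :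
  pair (a *: x1 + x2) (g j) *: v j =
  a *: (pair x1 (g j) *: v j) + pair x2 (g j) *: v j.
Proof. by rewrite pair_linl scalerDl scalerA. Qed.

Hypothesis pair_sep : forall x : X, (forall y : Y, pair x y = 0) -> x = 0.

Lemma sigma_sum_uniq u x x' :
  sigma_sum pair u x -> sigma_sum pair u x' -> x = x'.
Proof.
move=> hx hx'; apply/subr0_eq/pair_sep => y.
by rewrite pairB -(cvg_lim _ (hx y)) // -(cvg_lim _ (hx' y)) // subrr.
Qed.

Lemma sigma_sum_sum_le (L : nat) (u : 'I_L -> nat -> X) (C : R) :
  (forall l, exists w, sigma_sum pair (u l) w /\ `|w| <= C) ->
  exists w, sigma_sum pair (fun j => \sum_(l < L) u l j) w /\ `|w| <= C * L%:R.
Proof.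
move=> /choice[w hw]; exists (\sum_(l < L) w l); split.
  by apply: sigma_sum_big => l _; exact: (hw l).1.
rewrite (le_trans (ler_norm_sum _ _ _)) // mulr_natr -[X in _ *+ X](card_ord L).
by rewrite -sumr_const; apply: ler_sum => l _; exact: (hw l).2.
Qed.

Lemma sigma_sum_operator (u : X -> nat -> X) (C : R) :
  (forall a x1 x2 j, u (a *: x1 + x2) j = a *: u x1 j + u x2 j) ->
  (forall x, exists w, sigma_sum pair (u x) w /\ `|w| <= C * `|x|) ->
  exists T : X -> X, [/\ forall x, sigma_sum pair (u x) (T x),
    forall a x1 x2, T (a *: x1 + x2) = a *: T x1 + T x2 &
    forall x, `|T x| <= C * `|x|].
Proof.
move=> u_lin /choice[T hT]; exists T.
split=> [x|a x1 x2|x]; [exact: (hT x).1| |exact: (hT x).2].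
apply: sigma_sum_uniq (hT _).1 _; rewrite (funext (u_lin a x1 x2)).
by apply: sigma_sumD; [apply: sigma_sumZ|]; exact: (hT _).1.
Qed.

End LinearPairing.

Section IncreasingReindexing.
Context {R : realType} {X Y : normedModType R} {pair : X -> Y -> R}.
Context {n : nat -> nat}.
Hypothesis n_incr : forall i, (n i < n i.+1)%N.

Let n_mono : {mono n : i j / (i < j)%N}.
Proof. exact/leqW_mono/leq_mono/(homo_ltn ltn_trans n_incr). Qed.

Lemma incr_cvgny : (n @ \oo --> \oo)%classic.
Proof.
have leq_n i : (i <= n i)%N by elim: i => // i ih; exact: leq_ltn_trans ih (n_incr i).
apply/cvgnyPge => A; near=> i; apply: leq_trans (leq_n i).
by near: i; exact: nbhs_infty_ge.
Unshelve. all: by end_near.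
Qed.

Lemma sum_range_incr (w : nat -> X) M :
  \sum_(0 <= k < n M) (if `[< exists j, n j = k >] then w k else 0) =
  \sum_(0 <= j < M) w (n j).
Proof.
elim: M => [|M IH].
  rewrite [RHS]big_geq // big_nat big1 // => k /andP[_ kn0].
  by case: asboolP => // -[j jk]; rewrite -jk n_mono in kn0.
rewrite (@big_cat_nat _ _ _ (n M)) //=; last exact: ltnW.
rewrite IH big_nat_recr //=; congr (_ + _).
rewrite big_ltn //; case: asboolP => [_|[]]; last by exists M.
rewrite big_nat big1 ?addr0 // => k /andP[Mk kM1].
case: asboolP => // -[j jk]; rewrite -jk !n_mono in Mk kM1.
by rewrite ltnS leqNgt Mk in kM1.
Qed.

Lemma sigma_sum_subseq (w : nat -> X) z :
  sigma_sum pair (fun k => if `[< exists j, n j = k >] then w k else 0) z ->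
  sigma_sum pair (fun j => w (n j)) z.
Proof.
move=> hz y; apply: cvg_trans (cvg_comp n _ incr_cvgny (hz y)).
apply: near_eq_cvg; near=> M.
by rewrite /= -(big_mkord xpredT (fun j => w (n j))) -sum_range_incr big_mkord.
Unshelve. all: by end_near.
Qed.

End IncreasingReindexing.

Section Subsymmetric.
Context {R : realType} {X Y : normedModType R} {pair : X -> Y -> R}.
Context {e : nat -> X} {Cu Cs : R}.
Hypothesis pair_linl : forall (a : R) (x1 x2 : X) (y : Y),
  pair (a *: x1 + x2) y = a * pair x1 y + pair x2 y.
Hypothesis pair_sep : forall x : X, (forall y : Y, pair x y = 0) -> x = 0.
Hypothesis e_unc : unconditional pair e Cu.
Hypothesis e_spr : spreading pair e Cs.

Lemma spreading_ge1 (a : nat -> R) x :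
  x != 0 -> sigma_sum pair (fun j => a j *: e j) x -> 1 <= Cs.
Proof.
move=> x0 hx; have [_ /(_ x hx)[x' [hx' le_x]]] := e_spr a id ltnSn.
rewrite (sigma_sum_uniq pair_linl pair_sep _ _ _ hx' hx) in le_x.
by rewrite -(@ler_pMl _ _ `|x|) ?normr_gt0.
Qed.

Hypothesis Cs_gt0 : 0 < Cs.

Lemma subsymmetric_spread (a gamma : nat -> R) (n : nat -> nat) x :
  (forall j, `|gamma j| <= 1) -> (forall i, (n i < n i.+1)%N) ->
  sigma_sum pair (fun j => a j *: e j) x ->
  exists w, sigma_sum pair (fun j => (gamma j * a j) *: e (n j)) w /\
    `|w| <= Cu * Cs * `|x|.
Proof.
move=> gamma_le1 n_incr hx.
have [z [hz le_z]] := e_unc a gamma 1 x gamma_le1 hx.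
have [/(_ z hz)[w [hw le_w]] _] := e_spr (fun j => gamma j * a j) n n_incr.
exists w; split => //; rewrite ler_pdivrMl // in le_w.
by rewrite (le_trans le_w) // [Cu * Cs]mulrC -mulrA ler_pM2l // -[Cu]mulr1.
Qed.

Lemma subsymmetric_compress (a gamma : nat -> R) (n : nat -> nat) x :
  (forall j, `|gamma j| <= 1) -> (forall i, (n i < n i.+1)%N) ->
  sigma_sum pair (fun j => a j *: e j) x ->
  exists w, sigma_sum pair (fun j => (gamma (n j) * a (n j)) *: e j) w /\
    `|w| <= Cu * Cs * `|x|.
Proof.
move=> gamma_le1 n_incr hx.
pose delta k := if `[< exists j, n j = k >] then gamma k else 0.
have delta_le1 k : `|delta k| <= 1 by rewrite /delta; case: ifP; rewrite ?normr0.
have [z [hz le_z]] := e_unc a delta 1 x delta_le1 hx.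
have hz_sub : sigma_sum pair (fun j => (gamma (n j) * a (n j)) *: e (n j)) z.
  apply: (sigma_sum_subseq n_incr (fun k => (gamma k * a k) *: e k)).
  suff -> : (fun k => if `[< exists j, n j = k >] then (gamma k * a k) *: e k else 0) =
    fun k => (delta k * a k) *: e k by [].
  by apply: funext => k; rewrite /delta; case: ifP; rewrite ?mul0r ?scale0r.
have [_ /(_ z hz_sub)[w [hw le_w]]] :=
  e_spr (fun j => gamma (n j) * a (n j)) n n_incr.
exists w; split => //.
by rewrite (le_trans le_w) // [Cu * Cs]mulrC -mulrA ler_pM2l // -[Cu]mulr1.
Qed.

End Subsymmetric.

Lemma sum_pred1_seq {V : nmodType} {I : eqType} (r : seq I) (F : I -> V) i :
  uniq r -> \sum_(j <- r | j == i) F j = if i \in r then F i else 0.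
Proof.
move=> r_uniq; case: ifP => ir; last first.
  by rewrite big1_seq // => j /andP[/eqP -> ]; rewrite ir.
rewrite (big_rem i ir) /= eqxx big1_seq ?addr0 // => j /andP[/eqP -> ].
by rewrite mem_rem_uniqF.
Qed.

Section Biorthogonal.
Context {R : realType} {X Y : normedModType R} {pair : X -> Y -> R}.
Context {e : nat -> X} {f : nat -> Y}.
Hypothesis pair_linl : forall (a : R) (x1 x2 : X) (y : Y),
  pair (a *: x1 + x2) y = a * pair x1 y + pair x2 y.
Hypothesis pair_linr : forall (a : R) (x : X) (y1 y2 : Y),
  pair x (a *: y1 + y2) = a * pair x y1 + pair x y2.
Hypothesis pair_ef : forall j k, pair (e j) (f k) = if j == k then 1 else 0.

Lemma pair_sumr x (r : seq nat) (c : nat -> R) :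
  pair x (\sum_(l <- r) c l *: f l) = \sum_(l <- r) c l * pair x (f l).
Proof.
rewrite (pair_sum (pair := fun y x => pair x y)) => [|a y1 y2 x']; last exact: pair_linr.
apply: eq_bigr => l _.
by rewrite (pairZ (pair := fun y x => pair x y)) // => a y1 y2 x'.
Qed.

Lemma pair_biorth_sums (s t : seq nat) (a c : nat -> R) : uniq t ->
  pair (\sum_(k <- s) a k *: e k) (\sum_(l <- t) c l *: f l) =
  \sum_(k <- s | k \in t) a k * c k.
Proof.
move=> t_uniq; rewrite (pair_sum pair_linl) [RHS]big_mkcond.
apply: eq_bigr => k _; rewrite (pairZ pair_linl) pair_sumr.
under eq_bigr => l _ do rewrite pair_ef (fun_if ( *%R (c l))) mulr1 mulr0 eq_sym.
by rewrite -big_mkcond sum_pred1_seq //; case: ifP; rewrite ?mulr0.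
Qed.

End Biorthogonal.

Section Blocks.
Context {R : realType} {X Y : normedModType R} {pair : X -> Y -> R}.
Context {e : nat -> X} {f : nat -> Y} {L : nat} {Bs : nat -> seq nat}.
Context {eps : nat -> R}.
Hypothesis Bs_size : forall j, size (Bs j) = L.
Hypothesis Bs_incr : forall j k l, k \in Bs j -> l \in Bs j.+1 -> (k < l)%N.

Lemma block_nth_incr (m : 'I_L) j : (nth 0 (Bs j) m < nth 0 (Bs j.+1) m)%N.
Proof. by apply: (Bs_incr j); apply: mem_nth; rewrite Bs_size. Qed.

Lemma sum_block {V : nmodType} (F : nat -> V) j :
  \sum_(k <- Bs j) F k = \sum_(m < L) F (nth 0%N (Bs j) m).
Proof. by rewrite (big_nth 0%N) Bs_size big_mkord. Qed.

Lemma blocks_lt i j k l : (i < j)%N -> k \in Bs i -> l \in Bs j -> (k < l)%N.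
Proof.
elim: j l => // j IH l; rewrite ltnS leq_eqVlt => /orP[/eqP -> | ij] ki lj.
  exact: Bs_incr _ _ _ ki lj.
have Bj_gt0 : (0 < size (Bs j))%N by rewrite Bs_size -(Bs_size i); case: (Bs i) ki.
have Bj_nth := mem_nth 0%N Bj_gt0.
exact: (@ltn_trans _ _ _ (IH _ ij ki Bj_nth) (Bs_incr _ _ _ Bj_nth lj)).
Qed.

Section Bounds.
Context {Cu Cs : R}.
Hypothesis pair_linl : forall (a : R) (x1 x2 : X) (y : Y),
  pair (a *: x1 + x2) y = a * pair x1 y + pair x2 y.
Hypothesis e_unc : unconditional pair e Cu.
Hypothesis e_spr : spreading pair e Cs.
Hypothesis Cs_gt0 : 0 < Cs.
Hypothesis eps_le1 : forall k, `|eps k| <= 1.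

Lemma block_expansion_le a x : sigma_sum pair (fun j => a j *: e j) x ->
  exists w, sigma_sum pair (fun j => a j *: \sum_(k <- Bs j) eps k *: e k) w /\
    `|w| <= Cu * Cs * L%:R * `|x|.
Proof.
move=> hx; pose n (m : 'I_L) j := nth 0%N (Bs j) m.
have -> : (fun j => a j *: \sum_(k <- Bs j) eps k *: e k) =
    fun j => \sum_(m < L) (eps (n m j) * a j) *: e (n m j).
  apply: funext => j; rewrite sum_block scaler_sumr.
  by apply: eq_bigr => m _; rewrite scalerA mulrC.
rewrite mulrAC; apply: (sigma_sum_sum_le pair_linl) => m.
exact: (subsymmetric_spread e_unc e_spr Cs_gt0 a
  (fun j => eps (n m j)) (n m) x (fun j => eps_le1 _) (block_nth_incr m) hx).
Qed.

Lemma block_coefficients_le a x : sigma_sum pair (fun j => a j *: e j) x ->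
  exists w, sigma_sum pair (fun j => (\sum_(k <- Bs j) eps k * a k) *: e j) w /\
    `|w| <= Cu * Cs * L%:R * `|x|.
Proof.
move=> hx; pose n (m : 'I_L) j := nth 0%N (Bs j) m.
have -> : (fun j => (\sum_(k <- Bs j) eps k * a k) *: e j) =
    fun j => \sum_(m < L) (eps (n m j) * a (n m j)) *: e j.
  by apply: funext => j; rewrite sum_block scaler_suml.
rewrite mulrAC; apply: (sigma_sum_sum_le pair_linl) => m.
exact: (subsymmetric_compress e_unc e_spr Cs_gt0 a eps (n m) x
  eps_le1 (block_nth_incr m) hx).
Qed.

End Bounds.

Section Biorthogonality.
Hypothesis pair_linl : forall (a : R) (x1 x2 : X) (y : Y),
  pair (a *: x1 + x2) y = a * pair x1 y + pair x2 y.
Hypothesis pair_linr : forall (a : R) (x : X) (y1 y2 : Y),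
  pair x (a *: y1 + y2) = a * pair x y1 + pair x y2.
Hypothesis pair_ef : forall j k, pair (e j) (f k) = if j == k then 1 else 0.
Hypothesis Bs_uniq : forall j, uniq (Bs j).
Hypothesis eps_sign : forall k, eps k = 1 \/ eps k = -1.

Lemma pair_blocks i j :
  pair (\sum_(k <- Bs i) eps k *: e k) (\sum_(k <- Bs j) eps k *: f k) =
  if i == j then L%:R else 0.
Proof.
rewrite (pair_biorth_sums pair_linl pair_linr pair_ef) //.
case: eqP => [<-|/eqP ij].
  have eps_sq k : eps k * eps k = 1 by case: (eps_sign k) => ->; rewrite ?mulrNN mulr1.
  rewrite -big_seq (eq_bigr _ (fun k _ => eps_sq k)).
  by rewrite -(Bs_size i) -sum1_size natr_sum.
rewrite big1_seq // => k /andP[kj ki].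
case: ltngtP ij => // [ij|ji] _.
  by have := blocks_lt _ _ _ _ ij ki kj; rewrite ltnn.
by have := blocks_lt _ _ _ _ ji kj ki; rewrite ltnn.
Qed.

Lemma pair_block_expansion (a : nat -> R) w j :
  sigma_sum pair (fun i => a i *: \sum_(k <- Bs i) eps k *: e k) w ->
  pair w (\sum_(k <- Bs j) eps k *: f k) = a j * L%:R.
Proof.
move=> hw; rewrite (pair_sigma_sum_single pair_linl j _ _ _ hw) => [|i /negbTE ij].
  by rewrite (pairZ pair_linl) pair_blocks eqxx.
by rewrite (pairZ pair_linl) pair_blocks ij mulr0.
Qed.

End Biorthogonality.

End Blocks.

Theorem proposition3p5
  (R : realType) (X Y : completeNormedModType R) (pair : X -> Y -> R)
  (e : nat -> X) (f : nat -> Y) (Cd Cu Cs : R)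
  (* bilinearity of the pairing *)
  (pair_linl : forall (a : R) (x1 x2 : X) (y : Y),
      pair (a *: x1 + x2) y = a * pair x1 y + pair x2 y)
  (pair_linr : forall (a : R) (x : X) (y1 y2 : Y),
      pair x (a *: y1 + y2) = a * pair x y1 + pair x y2)
  (* normalized sequences *)
  (e_norm : forall j, `|e j| = 1) (f_norm : forall j, `|f j| = 1)
  (* (B1)-(B5) *)
  (B1 : forall x : X, (forall y : Y, pair x y = 0) -> x = 0)
  (B2 : forall y : Y, (forall x : X, pair x y = 0) -> y = 0)
  (Cd_gt0 : 0 < Cd)
  (B3 : forall x y, `|pair x y| <= Cd * `|x| * `|y|)
  (B4 : forall j k, pair (e j) (f k) = if j == k then 1 else 0)
  (B5 : forall x : X, sigma_sum pair (fun j => pair x (f j) *: e j) x)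
  (B5_uniq : forall (a : nat -> R) (x : X),
      sigma_sum pair (fun j => a j *: e j) x -> forall j, a j = pair x (f j))
  (* subsymmetry *)
  (e_subsym : subsymmetric pair e Cu Cs)
  (* blocks *)
  (L : nat) (Bs : nat -> seq nat)
  (Bs_uniq : forall j, uniq (Bs j))
  (Bs_size : forall j, size (Bs j) = L)
  (Bs_incr : forall j k l, k \in Bs j -> l \in Bs j.+1 -> (k < l)%N)
  (eps : nat -> R) (eps_sign : forall k, eps k = 1 \/ eps k = -1) :
  let b := fun j => \sum_(k <- Bs j) eps k *: e k in
  let d := fun j => \sum_(k <- Bs j) eps k *: f k in
  exists BB QQ : X -> X,
    (forall x, sigma_sum pair (fun j => pair x (f j) *: b j) (BB x)) /\
    (forall x, sigma_sum pair (fun j => pair x (d j) *: e j) (QQ x)) /\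
    (forall (a : R) (x1 x2 : X), BB (a *: x1 + x2) = a *: BB x1 + BB x2) /\
    (forall (a : R) (x1 x2 : X), QQ (a *: x1 + x2) = a *: QQ x1 + QQ x2) /\
    (forall x, QQ (BB x) = L%:R *: x) /\
    (forall x, `|BB x| <= Cu * Cs * L%:R * `|x|) /\
    (forall x, `|QQ x| <= Cu * Cs * L%:R * `|x|).
Proof.
move=> b d; have [e_unc e_spr] := e_subsym.
have Cs_gt0 : 0 < Cs.
  apply: lt_le_trans ltr01 (spreading_ge1 pair_linl B1 e_spr _ _ _ (B5 (e 0%N))).
  by rewrite -normr_gt0 e_norm.
have eps_le1 k : `|eps k| <= 1 by case: (eps_sign k) => ->; rewrite ?normrN normr1.
have B_bound x := block_expansion_le Bs_size Bs_incr pair_linl e_unc e_spr Cs_gt0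
  eps_le1 _ _ (B5 x).
have [BB [BB_sum BB_lin BB_le]] := sigma_sum_operator pair_linl B1
  (fun x j => pair x (f j) *: b j) _ (pair_scale_linear pair_linl f b) B_bound.
have Q_bound x : exists w, sigma_sum pair (fun j => pair x (d j) *: e j) w /\
    `|w| <= Cu * Cs * L%:R * `|x|.
  have -> : (fun j => pair x (d j) *: e j) =
      fun j => (\sum_(k <- Bs j) eps k * pair x (f k)) *: e j.
    by apply: funext => j; rewrite (pair_sumr pair_linr).
  exact (block_coefficients_le Bs_size Bs_incr pair_linl e_unc e_spr Cs_gt0
    eps_le1 _ _ (B5 x)).
have [QQ [QQ_sum QQ_lin QQ_le]] := sigma_sum_operator pair_linl B1
  (fun x j => pair x (d j) *: e j) _ (pair_scale_linear pair_linl d e) Q_bound.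
have QB x : QQ (BB x) = L%:R *: x.
  apply: (sigma_sum_uniq pair_linl B1 _ _ _ (QQ_sum (BB x))).
  have -> : (fun j => pair (BB x) (d j) *: e j) =
      fun j => L%:R *: (pair x (f j) *: e j).
    apply: funext => j; rewrite scalerA mulrC.
    by rewrite (pair_block_expansion Bs_size Bs_incr pair_linl pair_linr B4 Bs_uniq
      eps_sign _ _ _ (BB_sum x)).
  exact (sigma_sumZ pair_linl _ _ _ (B5 x)).
by exists BB, QQ.
Qed.
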